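(* Let $A\le B$ be quasi-copulas on $[0,1]^2$. Then there exists a copula $C$ with $A\le C\le B$ if and only if $L^{(A,B)}(R)\ge0$ for all $R\in\mathfrak{R}$.
   Context: For $Q:[0,1]^2\to\mathbb{R}$, $V_Q([s_1,s_2]\times[t_1,t_2])=Q(s_1,t_1)+Q(s_2,t_2)-Q(s_2,t_1)-Q(s_1,t_2)$. A copula is grounded ($Q(x,0)=Q(0,y)=0$), has neutral element 1 ($Q(x,1)=x$, $Q(1,y)=y$) and $V_Q(R)\ge0$ for all rectangles in $[0,1]^2$; a quasi-copula is grounded, has neutral element $1$, and $V_Q(R)\ge0$ for rectangles having a side on the boundary of $[0,1]^2$. A rectangle is $[s_1,s_2]\times[t_1,t_2]\subseteq[0,1]^2$ with $s_1<s_2$, $t_1<t_2$; main corners: southwest and northeast; opposite corners: southeast and northwest. $\mathfrak{R}$: finite formal unions $R=R_1\sqcup\dots\sqcup R_n$ of rectangles (repetitions allowed), with multiplicity $m_R(\mathbf{y})=\sum_i m_{R_i}(\mathbf{y})$, where $m_{R_i}(\mathbf{y})$ is $1$ at main corners, $-1$ at opposite corners, $0$ elsewhere. $L^{(A,B)}(R)=\sum_{m_R(\mathbf{y})>0}B(\mathbf{y})m_R(\mathbf{y})+\sum_{m_R(\mathbf{y})<0}A(\mathbf{y})m_R(\mathbf{y})$. *)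

From Stdlib Require Import Reals List ZArith.
Import ListNotations.
Open Scope R_scope.

Definition in01 (x : R) : Prop := 0 <= x <= 1.

Definition VQ (Q : R -> R -> R) (s1 s2 t1 t2 : R) : R :=
  Q s1 t1 + Q s2 t2 - Q s2 t1 - Q s1 t2.

Definition grounded (Q : R -> R -> R) : Prop :=
  forall x, in01 x -> Q x 0 = 0 /\ Q 0 x = 0.

Definition neutral1 (Q : R -> R -> R) : Prop :=
  forall x, in01 x -> Q x 1 = x /\ Q 1 x = x.

Definition rect : Type := (R * R * R * R)%type.

Definition is_rect (r : rect) : Prop :=
  let '(s1, s2, t1, t2) := r in
  0 <= s1 /\ s1 < s2 /\ s2 <= 1 /\ 0 <= t1 /\ t1 < t2 /\ t2 <= 1.

Definition is_copula (Q : R -> R -> R) : Prop :=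
  grounded Q /\ neutral1 Q /\
  forall s1 s2 t1 t2, is_rect (s1, s2, t1, t2) -> VQ Q s1 s2 t1 t2 >= 0.

Definition is_quasi_copula (Q : R -> R -> R) : Prop :=
  grounded Q /\ neutral1 Q /\
  forall s1 s2 t1 t2, is_rect (s1, s2, t1, t2) ->
    (s1 = 0 \/ s2 = 1 \/ t1 = 0 \/ t2 = 1) -> VQ Q s1 s2 t1 t2 >= 0.

Definition le01 (P Q : R -> R -> R) : Prop :=
  forall x y, in01 x -> in01 y -> P x y <= Q x y.

Definition pt : Type := (R * R)%type.

Definition pt_eq_dec (p q : pt) : {p = q} + {p <> q}.
Proof.
  destruct p as [a b], q as [c d].
  destruct (Req_EM_T a c) as [H1|H1]; destruct (Req_EM_T b d) as [H2|H2].
  - left; subst; reflexivity.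
  - right; intros H; inversion H; contradiction.
  - right; intros H; inversion H; contradiction.
  - right; intros H; inversion H; contradiction.
Defined.

Definition mult_rect (r : rect) (y : pt) : Z :=
  let '(s1, s2, t1, t2) := r in
  ((if pt_eq_dec y (s1, t1) then 1 else 0)
   + (if pt_eq_dec y (s2, t2) then 1 else 0)
   - (if pt_eq_dec y (s2, t1) then 1 else 0)
   - (if pt_eq_dec y (s1, t2) then 1 else 0))%Z.

(* A formal union R_1 ⊔ ... ⊔ R_n is a list of rectangles (repetitions allowed). *)
Definition funion : Type := list rect.

Definition is_funion (U : funion) : Prop := Forall is_rect U.

Definition mult (U : funion) (y : pt) : Z :=
  fold_right (fun r acc => (mult_rect r y + acc)%Z) 0%Z U.

Definition corners (r : rect) : list pt :=
  let '(s1, s2, t1, t2) := r in [(s1, t1); (s2, t2); (s2, t1); (s1, t2)].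

Definition support_pts (U : funion) : list pt :=
  nodup pt_eq_dec (flat_map corners U).

Definition Lterm (A B : R -> R -> R) (U : funion) (y : pt) : R :=
  let m := mult U y in
  if Z_lt_dec 0 m then B (fst y) (snd y) * IZR m
  else if Z_lt_dec m 0 then A (fst y) (snd y) * IZR m
  else 0.

Definition L_AB (A B : R -> R -> R) (U : funion) : R :=
  fold_right (fun y acc => Lterm A B U y + acc) 0 (support_pts U).

(* Necessity: [L^(A,B)(R)] dominates the pairing of [C] with the multiplicity
   [m_R], which is the sum of the [C]-volumes of the rectangles of [R].

   Sufficiency is a Hahn-Banach argument on integer weights (finitely
   supported functions from points to [Z]), on which [L^(A,B)] extends to a
   sublinear functional.  A function [c] known on a finite set [S] is
   admissible when its pairing with weights supported in [S] is dominated by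
   [L] after adding any multiplicity [m_U]; the hypothesis says that the empty
   function is admissible, and sublinearity lets admissible functions be
   extended one point at a time.  Admissible functions lie between [A] and [B]
   and give nonnegative volumes to rectangles with corners in their domain.
   Extending to all dyadic grids and rounding down to the grid of mesh [2^-n]
   yields 2-increasing functions increasing in [n], squeezed between
   [A - 2^(1-n)] and [B]; their supremum is the required copula. *)

From Stdlib Require Import Reals List ZArith Lra Lia Permutation ClassicalEpsilon Classical.
Import ListNotations.
Open Scope R_scope.

(** A sum over a list of points is taken after removing duplicates, so that
    it only depends on the set of points; it is moreover independent of the
    list as soon as the list covers the support of the summand. *)

Definition fsum (l : list pt) (h : pt -> R) : R :=
  fold_right (fun y acc => h y + acc) 0 l.

Definition sumS (sp : list pt) (h : pt -> R) : R := fsum (nodup pt_eq_dec sp) h.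

Lemma fsum_drop_zeros l h :
  fsum l h = fsum (filter (fun y => if Req_EM_T (h y) 0 then false else true) l) h.
Proof.
  induction l as [|a l IH]; simpl; auto.
  destruct (Req_EM_T (h a) 0) as [E|E]; simpl; rewrite IH; [rewrite E; ring | reflexivity].
Qed.

Lemma fsum_perm l l' h : Permutation l l' -> fsum l h = fsum l' h.
Proof. induction 1; simpl; lra. Qed.

Lemma sumS_indep sp1 sp2 h :
  (forall y, h y <> 0 -> In y sp1) -> (forall y, h y <> 0 -> In y sp2) ->
  sumS sp1 h = sumS sp2 h.
Proof.
  intros H1 H2. unfold sumS.
  rewrite (fsum_drop_zeros (nodup _ sp1)), (fsum_drop_zeros (nodup _ sp2)).
  apply fsum_perm, NoDup_Permutation; try apply NoDup_filter, NoDup_nodup.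
  intro x. rewrite !filter_In, !nodup_In.
  destruct (Req_EM_T (h x) 0); split; intros [_ F]; try discriminate; auto.
Qed.

Lemma sumS_ext sp h1 h2 : (forall y, In y sp -> h1 y = h2 y) -> sumS sp h1 = sumS sp h2.
Proof.
  intros H. unfold sumS. assert (H' : forall y, In y (nodup pt_eq_dec sp) -> h1 y = h2 y)
    by (intros y Hy; apply H; apply nodup_In in Hy; exact Hy).
  induction (nodup pt_eq_dec sp) as [|a l IH]; simpl; auto.
  rewrite H' by (left; auto). rewrite IH; auto. intros y Hy; apply H'; right; auto.
Qed.

Lemma sumS_le sp h1 h2 : (forall y, In y sp -> h1 y <= h2 y) -> sumS sp h1 <= sumS sp h2.
Proof.
  intros H. unfold sumS. assert (H' : forall y, In y (nodup pt_eq_dec sp) -> h1 y <= h2 y)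
    by (intros y Hy; apply H; apply nodup_In in Hy; exact Hy).
  induction (nodup pt_eq_dec sp) as [|a l IH]; simpl; [lra|].
  assert (h1 a <= h2 a) by (apply H'; left; auto).
  assert (fsum l h1 <= fsum l h2) by (apply IH; intros y Hy; apply H'; right; auto). lra.
Qed.

Lemma sumS_plus sp h1 h2 : sumS sp (fun y => h1 y + h2 y) = sumS sp h1 + sumS sp h2.
Proof. unfold sumS. induction (nodup pt_eq_dec sp); simpl; lra. Qed.

Lemma sumS_scal sp a h : sumS sp (fun y => a * h y) = a * sumS sp h.
Proof. unfold sumS. induction (nodup pt_eq_dec sp); simpl; [ring|]. rewrite IHl; ring. Qed.

Lemma sumS_single sp p h : (forall y, h y <> 0 -> y = p) -> In p sp -> sumS sp h = h p.
Proof.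
  intros H Hp. rewrite (sumS_indep sp [p]).
  - unfold sumS, fsum. simpl. ring.
  - intros y Hy. rewrite (H y Hy). auto.
  - intros y Hy. rewrite (H y Hy). simpl; auto.
Qed.

Definition supported (F : pt -> Z) (l : list pt) : Prop := forall y, F y <> 0%Z -> In y l.

Lemma supported_incl F l l' : incl l l' -> supported F l -> supported F l'.
Proof. intros Hi H y Hy. apply Hi, H, Hy. Qed.

Lemma supported_add F G l :
  supported F l -> supported G l -> supported (fun y => (F y + G y)%Z) l.
Proof. intros HF HG y Hy. destruct (Z.eq_dec (F y) 0); [apply HG; lia | apply HF; auto]. Qed.

Lemma supported_scale k F l : supported F l -> supported (fun y => (k * F y)%Z) l.
Proof. intros HF y Hy. apply HF. intro E. rewrite E in Hy. lia. Qed.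

Lemma supported_zero l : supported (fun _ => 0%Z) l.
Proof. intros y Hy. lia. Qed.

Definition dlt (p : pt) : pt -> Z := fun y => if pt_eq_dec y p then 1%Z else 0%Z.

Lemma supported_dlt p l : In p l -> supported (dlt p) l.
Proof. intros Hp y. unfold dlt. destruct (pt_eq_dec y p); [subst; auto | lia]. Qed.

(** * The functional [L] on integer weights

    When
    [A(y) <= B(y)] it equals [max (B(y) m, A(y) m)], hence is subadditive and
    positively homogeneous in [m]: [L] is a sublinear functional on weights. *)

Definition rho (A B : R -> R -> R) (y : pt) (m : Z) : R :=
  if Z_lt_dec 0 m then B (fst y) (snd y) * IZR m
  else if Z_lt_dec m 0 then A (fst y) (snd y) * IZR m else 0.

Definition sq (y : pt) : Prop := in01 (fst y) /\ in01 (snd y).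

Section Rho.
Variables (A B : R -> R -> R) (y : pt).
Hypothesis Hy : A (fst y) (snd y) <= B (fst y) (snd y).

Lemma rho_max m : rho A B y m = Rmax (B (fst y) (snd y) * IZR m) (A (fst y) (snd y) * IZR m).
Proof.
  unfold rho. destruct (Z_lt_dec 0 m) as [h|h].
  - apply IZR_lt in h. rewrite Rmax_left; nra.
  - destruct (Z_lt_dec m 0) as [h'|h'].
    + apply IZR_lt in h'. rewrite Rmax_right; nra.
    + replace m with 0%Z by lia. rewrite Rmax_left; simpl; lra.
Qed.

Lemma rho_subadd m1 m2 : rho A B y (m1 + m2) <= rho A B y m1 + rho A B y m2.
Proof.
  rewrite !rho_max, plus_IZR.
  set (b := B (fst y) (snd y)). set (a := A (fst y) (snd y)).
  pose proof (Rmax_l (b * IZR m1) (a * IZR m1)). pose proof (Rmax_r (b * IZR m1) (a * IZR m1)).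
  pose proof (Rmax_l (b * IZR m2) (a * IZR m2)). pose proof (Rmax_r (b * IZR m2) (a * IZR m2)).
  apply Rmax_lub; lra.
Qed.

Lemma rho_scale k m : (0 <= k)%Z -> rho A B y (k * m) = IZR k * rho A B y m.
Proof.
  intros Hk. rewrite !rho_max, mult_IZR.
  rewrite <- RmaxRmult by (apply IZR_le; exact Hk). f_equal; ring.
Qed.
End Rho.

Lemma rho_ge A B y c m : A (fst y) (snd y) <= c -> c <= B (fst y) (snd y) ->
  c * IZR m <= rho A B y m.
Proof.
  intros H1 H2. unfold rho. destruct (Z_lt_dec 0 m) as [h|h].
  - apply IZR_lt in h. nra.
  - destruct (Z_lt_dec m 0) as [h'|h'].
    + apply IZR_lt in h'. nra.
    + replace m with 0%Z by lia. simpl; lra.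
Qed.

Definition Lw (A B : R -> R -> R) (sp : list pt) (F : pt -> Z) : R :=
  sumS sp (fun y => rho A B y (F y)).

Definition pairing (c : pt -> R) (sp : list pt) (F : pt -> Z) : R :=
  sumS sp (fun y => c y * IZR (F y)).

Lemma L_AB_Lw A B U : L_AB A B U = Lw A B (flat_map corners U) (mult U).
Proof. reflexivity. Qed.

Lemma Lw_indep A B sp1 sp2 F : supported F sp1 -> supported F sp2 -> Lw A B sp1 F = Lw A B sp2 F.
Proof.
  intros H1 H2. apply sumS_indep; intros y Hy; [apply H1 | apply H2];
    intro E; rewrite E in Hy; unfold rho in Hy; simpl in Hy; lra.
Qed.

Lemma Lw_ext A B sp F G : (forall y, F y = G y) -> Lw A B sp F = Lw A B sp G.
Proof. intros H. apply sumS_ext. intros y _. rewrite H. reflexivity. Qed.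

Lemma Lw_zero A B sp : Lw A B sp (fun _ => 0%Z) = 0.
Proof. rewrite (Lw_indep A B sp []); [reflexivity | apply supported_zero ..]. Qed.

Lemma Lw_subadd A B sp F G : le01 A B -> Forall sq sp ->
  Lw A B sp (fun y => (F y + G y)%Z) <= Lw A B sp F + Lw A B sp G.
Proof.
  intros Hab Hsp. unfold Lw. rewrite <- sumS_plus. apply sumS_le.
  intros y Hy. rewrite Forall_forall in Hsp. destruct (Hsp y Hy).
  apply rho_subadd, Hab; auto.
Qed.

Lemma Lw_scale A B sp k F : le01 A B -> Forall sq sp -> (0 <= k)%Z ->
  Lw A B sp (fun y => (k * F y)%Z) = IZR k * Lw A B sp F.
Proof.
  intros Hab Hsp Hk. unfold Lw. rewrite <- sumS_scal. apply sumS_ext.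
  intros y Hy. rewrite Forall_forall in Hsp. destruct (Hsp y Hy).
  apply rho_scale; [apply Hab; auto | exact Hk].
Qed.

Lemma Lw_dirac A B sp p k : In p sp -> Lw A B sp (fun y => (k * dlt p y)%Z) = rho A B p k.
Proof.
  intros Hp. unfold Lw. rewrite (sumS_single sp p); [unfold dlt | | exact Hp].
  - destruct (pt_eq_dec p p); [f_equal; ring | congruence].
  - intros y Hy. unfold dlt in Hy. destruct (pt_eq_dec y p); auto.
    rewrite Z.mul_0_r in Hy. unfold rho in Hy; simpl in Hy; lra.
Qed.

Lemma pairing_indep c sp1 sp2 F :
  supported F sp1 -> supported F sp2 -> pairing c sp1 F = pairing c sp2 F.
Proof.
  intros H1 H2. apply sumS_indep; intros y Hy; [apply H1 | apply H2];
    intro E; rewrite E in Hy; simpl in Hy; lra.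
Qed.

Lemma pairing_ext c sp F G : (forall y, F y = G y) -> pairing c sp F = pairing c sp G.
Proof. intros H. apply sumS_ext. intros y _. rewrite H. reflexivity. Qed.

Lemma pairing_add c sp F G :
  pairing c sp (fun y => (F y + G y)%Z) = pairing c sp F + pairing c sp G.
Proof.
  unfold pairing. rewrite <- sumS_plus. apply sumS_ext. intros. rewrite plus_IZR; ring.
Qed.

Lemma pairing_scale c sp k F : pairing c sp (fun y => (k * F y)%Z) = IZR k * pairing c sp F.
Proof.
  unfold pairing. rewrite <- sumS_scal. apply sumS_ext. intros. rewrite mult_IZR; ring.
Qed.

Lemma pairing_dlt c sp p : In p sp -> pairing c sp (dlt p) = c p.
Proof.
  intros Hp. unfold pairing. rewrite (sumS_single sp p); [unfold dlt | | exact Hp].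
  - destruct (pt_eq_dec p p); [simpl; ring | congruence].
  - intros y Hy. unfold dlt in Hy. destruct (pt_eq_dec y p); auto. simpl in Hy. lra.
Qed.

Lemma mult_app U V y : mult (U ++ V) y = (mult U y + mult V y)%Z.
Proof. induction U as [|r U IH]; simpl; [lia|]. rewrite IH. lia. Qed.

Fixpoint rep (n : nat) (U : funion) : funion :=
  match n with O => [] | S n => U ++ rep n U end.

Lemma mult_rep n U y : mult (rep n U) y = (Z.of_nat n * mult U y)%Z.
Proof. induction n as [|n IH]; simpl rep; [reflexivity|]. rewrite mult_app, IH. lia. Qed.

Lemma funion_app U V : is_funion U -> is_funion V -> is_funion (U ++ V).
Proof. unfold is_funion; intros; apply Forall_app; auto. Qed.

Lemma funion_rep n U : is_funion U -> is_funion (rep n U).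
Proof. induction n; simpl; intros; [constructor | apply funion_app; auto]. Qed.

Lemma corners_rep n U : incl (flat_map corners (rep n U)) (flat_map corners U).
Proof.
  induction n as [|n IH]; simpl; [intros y []|].
  rewrite flat_map_app. apply incl_app; [apply incl_refl | exact IH].
Qed.

Lemma mult_rect_dlt s1 s2 t1 t2 y : mult_rect (s1, s2, t1, t2) y =
  (dlt (s1, t1) y + dlt (s2, t2) y + (-1) * dlt (s2, t1) y + (-1) * dlt (s1, t2) y)%Z.
Proof. unfold mult_rect, dlt. lia. Qed.

Lemma supported_mult U : supported (mult U) (flat_map corners U).
Proof.
  induction U as [|[[[s1 s2] t1] t2] U IH]; [intros y Hy; simpl in Hy; lia|].
  intros y Hy. change (mult _ y) with (mult_rect (s1, s2, t1, t2) y + mult U y)%Z in Hy.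
  rewrite mult_rect_dlt in Hy. unfold dlt in Hy. simpl.
  destruct (pt_eq_dec y (s1, t1)); [auto|]. destruct (pt_eq_dec y (s2, t2)); [auto|].
  destruct (pt_eq_dec y (s2, t1)); [auto|]. destruct (pt_eq_dec y (s1, t2)); [auto 6|].
  right; right; right; right. apply IH. lia.
Qed.

Lemma corners_sq U : is_funion U -> Forall sq (flat_map corners U).
Proof.
  intros H. apply Forall_forall. intros y Hy. apply in_flat_map in Hy as [r [Hr Hy]].
  unfold is_funion in H. rewrite Forall_forall in H. specialize (H r Hr).
  destruct r as [[[s1 s2] t1] t2]. simpl in H, Hy. unfold sq, in01.
  intuition; subst; simpl; lra.
Qed.

Lemma pairing_rect c sp s1 s2 t1 t2 : incl (corners (s1, s2, t1, t2)) sp ->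
  pairing c sp (mult_rect (s1, s2, t1, t2)) =
  c (s1, t1) + c (s2, t2) - c (s2, t1) - c (s1, t2).
Proof.
  intros H. rewrite (pairing_ext c sp _ _ (mult_rect_dlt s1 s2 t1 t2)).
  rewrite !pairing_add, !pairing_scale, !pairing_dlt by (apply H; simpl; tauto). simpl. ring.
Qed.

(* Discharges membership and support side conditions for weights built from
   [dlt], [mult] and weights already known to be supported. *)
Ltac solve_incl :=
  let y := fresh "y" in let Hy := fresh "Hy" in
  intros y Hy; rewrite ?in_app_iff in *; simpl in *; rewrite ?in_app_iff in *; tauto.

Ltac solve_supported :=
  repeat first [ apply supported_add | apply supported_scale ];
  first [ apply supported_dlt; simpl; rewrite ?in_app_iff; simpl; tauto
        | eapply supported_incl; [| apply supported_mult]; solve_incl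
        | eapply supported_incl; [| eassumption]; solve_incl ].

(** * Admissible partial functions and the one-point extension

    For [S = []] this
    is exactly the condition [L^(A,B) >= 0].  As in the Hahn-Banach theorem,
    the sublinearity of [L] lets one extend an admissible [c] to any further
    point, by choosing its value between a family of lower and a family of
    upper bounds. *)

Definition admissible (A B : R -> R -> R) (c : pt -> R) (S : list pt) : Prop :=
  Forall sq S /\
  forall (f : pt -> Z) (U : funion), is_funion U -> supported f S ->
    pairing c S f <= Lw A B (S ++ flat_map corners U) (fun y => (f y + mult U y)%Z).

Definition upd (c : pt -> R) (z : pt) (v : R) : pt -> R :=
  fun y => if pt_eq_dec y z then v else c y.

Lemma le_div_iff v x a : 0 < a -> (v <= x / a <-> v * a <= x).
Proof.
  intros Ha. replace x with (x / a * a) at 2 by (field; lra).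
  split; intros H; [apply Rmult_le_compat_r | apply Rmult_le_reg_r with a]; lra.
Qed.

Lemma div_le_iff x v a : 0 < a -> (x / a <= v <-> x <= v * a).
Proof.
  intros Ha. replace x with (x / a * a) at 2 by (field; lra).
  split; intros H; [apply Rmult_le_compat_r | apply Rmult_le_reg_r with a]; lra.
Qed.

Lemma div_cross x y s t : 0 < s -> 0 < t -> x * t <= y * s -> x / s <= y / t.
Proof.
  intros Hs Ht H. apply Rmult_le_reg_r with (s * t); [nra|].
  replace (x / s * (s * t)) with (x * t) by (field; lra).
  replace (y / t * (s * t)) with (y * s) by (field; lra). exact H.
Qed.

Section OnePointExtension.
Variables (A B : R -> R -> R) (c : pt -> R) (S : list pt) (z : pt).
Hypothesis Hab : le01 A B.
Hypothesis Hadm : admissible A B c S.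
Hypothesis Hz : sq z.

Let wt (f : pt -> Z) (t : Z) (U : funion) : pt -> Z :=
  fun y => (f y + t * dlt z y + mult U y)%Z.
Let pts (U : funion) : list pt := S ++ z :: flat_map corners U.

(* Admissibility of [upd c z v] asks [v t <= L(wt f t U) - <c, f>] for all
   [t]; dividing by [t] gives an upper bound on [v] for [t > 0] and a lower
   bound for [t < 0]. *)
Definition upper_quot (u : R) : Prop :=
  exists f U t, is_funion U /\ supported f S /\ (0 < t)%Z /\
    u = (Lw A B (pts U) (wt f t U) - pairing c S f) / IZR t.

Definition lower_quot (l : R) : Prop :=
  exists f U s, is_funion U /\ supported f S /\ (0 < s)%Z /\
    l = (pairing c S f - Lw A B (pts U) (wt f (- s) U)) / IZR s.

(* Every lower bound is below every upper bound: combine the two weights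
   with coefficients [s] and [t], which cancels the [z]-component, and use
   admissibility on [S] followed by sublinearity of [L]. *)
Lemma lower_le_upper l u : lower_quot l -> upper_quot u -> l <= u.
Proof.
  intros [g [U' [s [HU' [Hg [Hs ->]]]]]] [f [U [t [HU [Hf [Ht ->]]]]]].
  destruct Hadm as [HS HI].
  set (W := S ++ z :: flat_map corners U ++ flat_map corners U').
  assert (HW : Forall sq W).
  { unfold W. apply Forall_app; split; auto. constructor; auto.
    rewrite <- flat_map_app. apply corners_sq, funion_app; auto. }
  unfold pts, wt.
  rewrite (Lw_indep A B _ W (fun y => (f y + t * dlt z y + mult U y)%Z)) by (unfold W; solve_supported).
  rewrite (Lw_indep A B _ W (fun y => (g y + - s * dlt z y + mult U' y)%Z)) by (unfold W; solve_supported).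
  set (F := fun y => (f y + t * dlt z y + mult U y)%Z).
  set (G := fun y => (g y + - s * dlt z y + mult U' y)%Z).
  set (U'' := rep (Z.to_nat s) U ++ rep (Z.to_nat t) U').
  set (h := fun y => (s * f y + t * g y)%Z).
  assert (Hdom : IZR s * pairing c S f + IZR t * pairing c S g
                 <= Lw A B W (fun y => (s * F y + t * G y)%Z)).
  { rewrite <- !pairing_scale, <- pairing_add.
    eapply Rle_trans; [apply (HI h U''); [apply funion_app; apply funion_rep; auto | unfold h; solve_supported]|].
    assert (HU'' : incl (flat_map corners U'') (flat_map corners U ++ flat_map corners U')).
    { unfold U''. rewrite flat_map_app. apply incl_app.
      - apply incl_appl, corners_rep.
      - apply incl_appr, corners_rep. }
    right. rewrite (Lw_indep A B _ W).
    - apply Lw_ext. intros y. unfold F, G, h, U''.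
      rewrite mult_app, !mult_rep, !Z2Nat.id by lia. ring.
    - unfold h; solve_supported.
    - unfold h, W. apply supported_add; [solve_supported|].
      eapply supported_incl; [|apply supported_mult].
      intros y Hy. apply HU'' in Hy. revert y Hy. solve_incl. }
  assert (Hsub : Lw A B W (fun y => (s * F y + t * G y)%Z)
                 <= IZR s * Lw A B W F + IZR t * Lw A B W G).
  { rewrite <- !Lw_scale by (auto; lia). apply Lw_subadd; auto. }
  apply IZR_lt in Hs, Ht. apply div_cross; [exact Hs | exact Ht | nra].
Qed.

Lemma separating_value_ok v :
  (forall l, lower_quot l -> l <= v) -> (forall u, upper_quot u -> v <= u) ->
  forall f U t, is_funion U -> supported f S ->
    pairing c S f + v * IZR t <= Lw A B (pts U) (wt f t U).
Proof.
  intros Hlo Hup f U t HU Hf.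
  destruct (Z_lt_le_dec 0 t) as [Ht|Ht]; [|destruct (Z.eq_dec t 0) as [Ht0|Ht0]].
  - assert (Hv : v <= (Lw A B (pts U) (wt f t U) - pairing c S f) / IZR t)
      by (apply Hup; exists f, U, t; auto).
    apply le_div_iff in Hv; [lra | apply IZR_lt, Ht].
  - subst t. rewrite Rmult_0_r, Rplus_0_r. eapply Rle_trans; [apply (proj2 Hadm f U HU Hf)|].
    right. unfold pts, wt. rewrite (Lw_indep A B _ (S ++ z :: flat_map corners U)) by solve_supported.
    apply Lw_ext. intros y. ring.
  - assert (Hv : (pairing c S f - Lw A B (pts U) (wt f (- - t) U)) / IZR (- t) <= v)
      by (apply Hlo; exists f, U, (- t)%Z; repeat split; auto; lia).
    rewrite Z.opp_involutive in Hv.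
    apply div_le_iff in Hv; [rewrite opp_IZR in Hv; lra | apply IZR_lt; lia].
Qed.

Lemma one_point_extension : exists v, admissible A B (upd c z v) (z :: S).
Proof.
  assert (Hu0 : exists u, upper_quot u).
  { eexists. exists (fun _ => 0%Z), [], 1%Z.
    split; [constructor|]. split; [apply supported_zero|]. split; [lia | reflexivity]. }
  assert (Hl0 : exists l, lower_quot l).
  { eexists. exists (fun _ => 0%Z), [], 1%Z.
    split; [constructor|]. split; [apply supported_zero|]. split; [lia | reflexivity]. }
  destruct Hu0 as [u0 Hu0].
  destruct (completeness lower_quot) as [v [Hub Hlub]].
  { exists u0. intros l Hl. exact (lower_le_upper l u0 Hl Hu0). }
  { exact Hl0. }
  exists v. split; [constructor; [exact Hz | apply Hadm]|].
  intros f' U HU Hf'.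
  set (t := f' z). set (f := fun y => if pt_eq_dec y z then 0%Z else f' y).
  assert (Hf : supported f S).
  { intros y. unfold f. destruct (pt_eq_dec y z); [lia|].
    intros H. destruct (Hf' y H); [congruence | auto]. }
  assert (Ef' : forall y, f' y = (f y + t * dlt z y)%Z).
  { intros y. unfold f, dlt, t. destruct (pt_eq_dec y z); subst; lia. }
  replace (pairing (upd c z v) (z :: S) f') with (pairing c S f + v * IZR t).
  2:{ rewrite (pairing_ext _ _ _ _ Ef'), pairing_add, pairing_scale, pairing_dlt by (left; auto).
      unfold upd at 2. destruct (pt_eq_dec z z); [|congruence].
      rewrite (pairing_indep _ (z :: S) S) by solve_supported.
      replace (pairing (upd c z v) S f) with (pairing c S f); [ring|].
      apply sumS_ext. intros y _. unfold upd, f. destruct (pt_eq_dec y z); simpl; [ring | reflexivity]. }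
  assert (Hup : forall u, upper_quot u -> v <= u).
  { intros u Hu. apply Hlub. intros l Hl. exact (lower_le_upper l u Hl Hu). }
  eapply Rle_trans; [exact (separating_value_ok v Hub Hup f U t HU Hf)|].
  right. unfold pts, wt. rewrite (Lw_indep A B _ ((z :: S) ++ flat_map corners U)) by solve_supported.
  apply Lw_ext. intros y. rewrite Ef'. ring.
Qed.
End OnePointExtension.

Section AdmissibleValues.
Variables (A B : R -> R -> R) (c : pt -> R) (S : list pt).
Hypothesis Hadm : admissible A B c S.

(* Testing admissibility on [k] times a Dirac weight. *)
Lemma admissible_dirac y k : In y S -> c y * IZR k <= rho A B y k.
Proof.
  intros Hy. destruct Hadm as [_ HI].
  pose proof (HI (fun x => (k * dlt y x)%Z) [] ltac:(constructor) ltac:(solve_supported)) as H.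
  rewrite pairing_scale, pairing_dlt in H by exact Hy.
  rewrite (Lw_ext A B _ _ (fun x => (k * dlt y x)%Z)) in H by (intros; simpl; ring).
  rewrite Lw_dirac in H by (simpl; rewrite app_nil_r; exact Hy).
  lra.
Qed.

Lemma admissible_bounds y : In y S -> A (fst y) (snd y) <= c y <= B (fst y) (snd y).
Proof.
  intros Hy. pose proof (admissible_dirac y 1 Hy). pose proof (admissible_dirac y (-1) Hy).
  unfold rho in *. simpl in *. lra.
Qed.

(* A rectangle with all four corners in [S] has nonnegative [c]-volume:
   test admissibility on [-m_r] together with the formal union [r]. *)
Lemma admissible_rect s1 s2 t1 t2 : is_rect (s1, s2, t1, t2) ->
  incl (corners (s1, s2, t1, t2)) S ->
  c (s1, t1) + c (s2, t2) - c (s2, t1) - c (s1, t2) >= 0.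
Proof.
  intros Hr Hinc. destruct Hadm as [_ HI].
  assert (Hm : forall y, mult [(s1, s2, t1, t2)] y = (mult_rect (s1, s2, t1, t2) y + 0)%Z)
    by reflexivity.
  assert (Hsupp : supported (mult_rect (s1, s2, t1, t2)) S).
  { intros y Hy. apply Hinc. pose proof (supported_mult [(s1, s2, t1, t2)] y) as H.
    rewrite Hm in H.
    assert (Hy' : In y (flat_map corners [(s1, s2, t1, t2)])) by (apply H; lia).
    simpl in Hy' |- *. tauto. }
  assert (H := HI (fun y => (-1 * mult_rect (s1, s2, t1, t2) y)%Z) [(s1, s2, t1, t2)]
                 ltac:(constructor; auto; constructor) (supported_scale _ _ _ Hsupp)).
  rewrite pairing_scale, pairing_rect in H by exact Hinc.
  rewrite (Lw_ext A B _ _ (fun _ => 0%Z)), Lw_zero in H by (intros y; rewrite Hm; lia).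
  lra.
Qed.

Lemma admissible_grounded x : grounded A -> grounded B -> in01 x ->
  (In (x, 0) S -> c (x, 0) = 0) /\ (In (0, x) S -> c (0, x) = 0).
Proof.
  intros HgA HgB Hx. destruct (HgA x Hx), (HgB x Hx).
  split; intros Hin; pose proof (admissible_bounds _ Hin); simpl in *; lra.
Qed.

Lemma admissible_mono_x x x' y : grounded A -> grounded B ->
  in01 x -> in01 x' -> in01 y -> x <= x' ->
  incl [(x, y); (x', y); (x, 0); (x', 0)] S -> c (x, y) <= c (x', y).
Proof.
  intros HgA HgB Hx Hx' Hy Hle Hinc. unfold in01 in *.
  assert (E : c (x, 0) = 0 /\ c (x', 0) = 0).
  { split; apply (admissible_grounded _ HgA HgB); auto; apply Hinc; simpl; tauto. }
  destruct (Req_dec x x') as [<-|Hne]; [lra|]. destruct (Req_dec y 0) as [->|Hy0]; [lra|].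
  assert (H := admissible_rect x x' 0 y ltac:(simpl; lra)
                 ltac:(intros p Hp; apply Hinc; simpl in *; tauto)). lra.
Qed.

Lemma admissible_mono_y x y y' : grounded A -> grounded B ->
  in01 x -> in01 y -> in01 y' -> y <= y' ->
  incl [(x, y); (x, y'); (0, y); (0, y')] S -> c (x, y) <= c (x, y').
Proof.
  intros HgA HgB Hx Hy Hy' Hle Hinc. unfold in01 in *.
  assert (E : c (0, y) = 0 /\ c (0, y') = 0).
  { split; apply (admissible_grounded _ HgA HgB); auto; apply Hinc; simpl; tauto. }
  destruct (Req_dec y y') as [<-|Hne]; [lra|]. destruct (Req_dec x 0) as [->|Hx0]; [lra|].
  assert (H := admissible_rect 0 x y y' ltac:(simpl; lra)
                 ltac:(intros p Hp; apply Hinc; simpl in *; tauto)). lra.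
Qed.
End AdmissibleValues.

(** * Dyadic grids and dyadic rounding down *)

Definition d (n i : nat) : R := INR i / 2 ^ n.

Definition grid (n : nat) : list pt :=
  flat_map (fun i => map (fun j => (d n i, d n j)) (seq 0 (S (Nat.pow 2 n))))
           (seq 0 (S (Nat.pow 2 n))).

Lemma pow2_pos n : 0 < 2 ^ n.
Proof. apply pow_lt; lra. Qed.

Lemma INR_pow2 n : INR (Nat.pow 2 n) = 2 ^ n.
Proof. rewrite pow_INR. simpl. f_equal; lra. Qed.

Lemma d_in01 n i : (i <= Nat.pow 2 n)%nat -> in01 (d n i).
Proof.
  intros H. unfold d, in01. pose proof (pow2_pos n). apply le_INR in H. rewrite INR_pow2 in H.
  pose proof (pos_INR i). split.
  - apply Rmult_le_pos; [lra | left; apply Rinv_0_lt_compat; lra].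
  - apply div_le_iff; lra.
Qed.

Lemma d_zero k : d k 0 = 0.
Proof. unfold d. simpl. unfold Rdiv. ring. Qed.

Lemma d_double n i : d n i = d (S n) (2 * i).
Proof. unfold d. rewrite mult_INR. simpl. pose proof (pow2_pos n). field. lra. Qed.

Lemma d_odd n i : d (S n) (2 * i + 1) = d n i + / 2 ^ (S n).
Proof. unfold d. rewrite plus_INR, mult_INR. simpl. pose proof (pow2_pos n). field. lra. Qed.

Lemma d_lift k m i : (k <= m)%nat -> (i <= Nat.pow 2 k)%nat ->
  exists i', (i' <= Nat.pow 2 m)%nat /\ d k i = d m i'.
Proof.
  intros H. induction H as [|m H IH]; intros Hi.
  - exists i; auto.
  - destruct (IH Hi) as [i' [H1 H2]]. exists (2 * i')%nat. split.
    + simpl. lia.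
    + rewrite H2. apply d_double.
Qed.

Lemma grid_sq n : Forall sq (grid n).
Proof.
  apply Forall_forall. intros y Hy. unfold grid in Hy. apply in_flat_map in Hy as [i [Hi Hy]].
  apply in_map_iff in Hy as [j [<- Hj]]. apply in_seq in Hi, Hj.
  split; simpl; apply d_in01; lia.
Qed.

Lemma grid_in n i j : (i <= Nat.pow 2 n)%nat -> (j <= Nat.pow 2 n)%nat ->
  In (d n i, d n j) (grid n).
Proof.
  intros Hi Hj. unfold grid. apply in_flat_map. exists i. split; [apply in_seq; lia|].
  apply in_map_iff. exists j. split; auto. apply in_seq; lia.
Qed.

(* [fl n x = d n (idx n x)] rounds [x] down to the grid of mesh [2^-n],
   computed bit by bit so that it is visibly nondecreasing in [n]. *)
Fixpoint idx (n : nat) (x : R) : nat :=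
  match n with
  | O => if Rle_dec 1 x then 1%nat else 0%nat
  | S n => let i := idx n x in
           if Rle_dec (d (S n) (2 * i + 1)) x then (2 * i + 1)%nat else (2 * i)%nat
  end.

Definition fl (n : nat) (x : R) : R := d n (idx n x).

Lemma idx_spec n x : in01 x ->
  (idx n x <= Nat.pow 2 n)%nat /\ fl n x <= x /\ x <= fl n x + / 2 ^ n.
Proof.
  intros Hx. unfold fl. induction n as [|n IH].
  - simpl. unfold d, in01 in *. simpl. destruct (Rle_dec 1 x); simpl; split; try lia; lra.
  - destruct IH as [H1 [H2 H3]]. cbn [idx]. set (i := idx n x) in *.
    destruct (Rle_dec (d (S n) (2 * i + 1)) x) as [h|h].
    + split; [|split; auto].
      * apply INR_le. rewrite INR_pow2. unfold d in h. unfold in01 in Hx.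
        pose proof (pow2_pos (S n)). apply div_le_iff in h; [nra | lra].
      * assert (E : / 2 ^ S n + / 2 ^ S n = / 2 ^ n)
          by (pose proof (pow2_pos n); simpl; field; lra).
        rewrite d_odd. lra.
    + split; [simpl; lia|]. rewrite <- d_double. split; auto.
      rewrite d_odd in h. lra.
Qed.

Lemma fl_in01 n x : in01 x -> in01 (fl n x).
Proof. intros H. apply d_in01, idx_spec, H. Qed.

Lemma fl_mono_n n x : fl n x <= fl (S n) x.
Proof.
  unfold fl. cbn [idx]. rewrite (d_double n). destruct (Rle_dec _ x); [|lra].
  unfold d. apply Rmult_le_compat_r; [left; apply Rinv_0_lt_compat, pow2_pos|].
  apply le_INR. lia.
Qed.

Lemma idx_mono n x x' : x <= x' -> (idx n x <= idx n x')%nat.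
Proof.
  intros H. induction n as [|n IH]; cbn [idx].
  - destruct (Rle_dec 1 x), (Rle_dec 1 x'); lia || lra.
  - destruct (Nat.eq_dec (idx n x) (idx n x')) as [E|E].
    + rewrite E. destruct (Rle_dec _ x), (Rle_dec _ x'); try lia. lra.
    + destruct (Rle_dec _ x), (Rle_dec _ x'); lia.
Qed.

Lemma fl_mono n x x' : x <= x' -> fl n x <= fl n x'.
Proof.
  intros H. unfold fl, d. apply Rmult_le_compat_r; [left; apply Rinv_0_lt_compat, pow2_pos|].
  apply le_INR, idx_mono, H.
Qed.

Lemma INR_lt_pow2 n : INR n < 2 ^ n.
Proof.
  induction n; [simpl; lra|]. rewrite S_INR. change (2 ^ S n) with (2 * 2 ^ n).
  assert (1 <= 2 ^ n) by (apply pow_R1_Rle; lra). lra.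
Qed.

Lemma small_pow2 e : 0 < e -> exists n, 2 * / 2 ^ n < e.
Proof.
  intros He. destruct (archimed_cor1 (e / 2) ltac:(lra)) as [N [HN HN0]].
  exists N. pose proof (INR_lt_pow2 N). apply lt_0_INR in HN0.
  assert (/ 2 ^ N < / INR N) by (apply Rinv_lt_contravar; nra). lra.
Qed.

(** * Extending an admissible function to all dyadic points

    Starting from the empty function, which is admissible exactly when
    [L^(A,B) >= 0], we extend one point at a time along the grids of mesh
    [2^-n].  Values are never changed once assigned. *)

Definition extend_at (A B : R -> R -> R) (cs : (pt -> R) * list pt) (z : pt)
  : (pt -> R) * list pt :=
  let (c, S) := cs in
  if in_dec pt_eq_dec z S then (c, S)
  else (upd c z (epsilon (inhabits 0) (fun v => admissible A B (upd c z v) (z :: S))), z :: S).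

Lemma extend_at_admissible A B cs z : le01 A B -> sq z ->
  admissible A B (fst cs) (snd cs) -> admissible A B (fst (extend_at A B cs z)) (snd (extend_at A B cs z)).
Proof.
  destruct cs as [c S]. simpl. intros Hab Hz HI.
  destruct (in_dec pt_eq_dec z S); auto. simpl.
  apply epsilon_spec, one_point_extension; auto.
Qed.

Lemma extend_at_keep A B cs z y : In y (snd cs) ->
  In y (snd (extend_at A B cs z)) /\ fst (extend_at A B cs z) y = fst cs y.
Proof.
  destruct cs as [c S]. simpl. intros Hy.
  destruct (in_dec pt_eq_dec z S); simpl; auto.
  split; auto. unfold upd. destruct (pt_eq_dec y z); subst; tauto.
Qed.

Lemma extend_at_in A B cs z : In z (snd (extend_at A B cs z)).
Proof. destruct cs as [c S]. simpl. destruct (in_dec pt_eq_dec z S); simpl; auto. Qed.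

Lemma extend_all_admissible A B l cs : le01 A B -> Forall sq l ->
  admissible A B (fst cs) (snd cs) ->
  admissible A B (fst (fold_left (extend_at A B) l cs)) (snd (fold_left (extend_at A B) l cs)).
Proof.
  intros Hab. revert cs. induction l as [|z l IH]; simpl; intros cs Hl H; auto.
  inversion Hl; subst. apply IH; auto. apply extend_at_admissible; auto.
Qed.

Lemma extend_all_keep A B l cs y : In y (snd cs) ->
  In y (snd (fold_left (extend_at A B) l cs)) /\ fst (fold_left (extend_at A B) l cs) y = fst cs y.
Proof.
  revert cs. induction l as [|z l IH]; simpl; intros cs H; auto.
  destruct (extend_at_keep A B cs z y H) as [H1 H2].
  destruct (IH _ H1) as [H3 H4]. rewrite H4, H2. auto.
Qed.

Lemma extend_all_in A B l cs z : In z l -> In z (snd (fold_left (extend_at A B) l cs)).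
Proof.
  revert cs. induction l as [|a l IH]; simpl; intros cs H; [tauto|].
  destruct H as [<-|H]; auto. apply extend_all_keep, extend_at_in.
Qed.

(* [stage A B (S n)] is defined on all points of the grids of level [<= n]. *)
Fixpoint stage (A B : R -> R -> R) (n : nat) : (pt -> R) * list pt :=
  match n with
  | O => (fun _ => 0, [])
  | S n => fold_left (extend_at A B) (grid n) (stage A B n)
  end.

Lemma stage_admissible A B n : le01 A B ->
  (forall U : funion, is_funion U -> L_AB A B U >= 0) ->
  admissible A B (fst (stage A B n)) (snd (stage A B n)).
Proof.
  intros Hab HL. induction n as [|n IH].
  - split; [constructor|]. intros f U HU Hf. simpl in Hf |- *.
    assert (Hf0 : forall y, f y = 0%Z)
      by (intros y; destruct (Z.eq_dec (f y) 0) as [|Hy]; [auto | destruct (Hf y Hy)]).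
    change (pairing (fun _ => 0) [] f) with 0.
    rewrite (Lw_ext A B _ _ (mult U)) by (intros y; rewrite Hf0; lia).
    rewrite <- L_AB_Lw. apply Rge_le, HL; auto.
  - apply extend_all_admissible; auto. apply grid_sq.
Qed.

Lemma stage_keep A B m n y : (m <= n)%nat -> In y (snd (stage A B m)) ->
  In y (snd (stage A B n)) /\ fst (stage A B n) y = fst (stage A B m) y.
Proof.
  intros Hmn. induction Hmn as [|n Hmn IH]; intros H; auto.
  destruct (IH H) as [H1 H2]. cbn [stage].
  destruct (extend_all_keep A B (grid n) (stage A B n) y H1) as [H3 H4].
  rewrite H4; auto.
Qed.

Lemma fl_zero k : fl k 0 = 0.
Proof.
  unfold fl. replace (idx k 0) with 0%nat; [apply d_zero|].
  induction k as [|k IH]; cbn [idx]; destruct (Rle_dec _ 0) as [h|h]; try lra; try lia.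
  rewrite <- IH, d_odd, d_zero in h.
  pose proof (pow2_pos (S k)). assert (0 < / 2 ^ S k) by (apply Rinv_0_lt_compat; lra). lra.
Qed.

Lemma stage_fl_in A B n k1 k2 x y : in01 x -> in01 y -> (k1 <= n)%nat -> (k2 <= n)%nat ->
  In (fl k1 x, fl k2 y) (snd (stage A B (S n))).
Proof.
  intros Hx Hy H1 H2.
  destruct (d_lift _ _ (idx k1 x) H1 (proj1 (idx_spec k1 x Hx))) as [i [Hi Ei]].
  destruct (d_lift _ _ (idx k2 y) H2 (proj1 (idx_spec k2 y Hy))) as [j [Hj Ej]].
  unfold fl. rewrite Ei, Ej. cbn [stage]. apply extend_all_in, grid_in; auto.
Qed.

Section QuasiCopula.
Variable Q : R -> R -> R.
Hypothesis HQ : is_quasi_copula Q.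

Lemma qc_mono_x x x' y : in01 x -> in01 x' -> in01 y -> x <= x' -> Q x y <= Q x' y.
Proof.
  destruct HQ as [Hg [_ HV]]. intros Hx Hx' Hy Hle. unfold in01 in *.
  destruct (Req_dec x x') as [<-|Hne]; [lra|].
  destruct (Req_dec y 0) as [->|Hy0].
  - rewrite (proj1 (Hg x Hx)), (proj1 (Hg x' Hx')). lra.
  - assert (H := HV x x' 0 y ltac:(simpl; lra) ltac:(tauto)). unfold VQ in H.
    rewrite (proj1 (Hg x Hx)), (proj1 (Hg x' Hx')) in H. lra.
Qed.

Lemma qc_mono_y x y y' : in01 x -> in01 y -> in01 y' -> y <= y' -> Q x y <= Q x y'.
Proof.
  destruct HQ as [Hg [_ HV]]. intros Hx Hy Hy' Hle. unfold in01 in *.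
  destruct (Req_dec y y') as [<-|Hne]; [lra|].
  destruct (Req_dec x 0) as [->|Hx0].
  - rewrite (proj2 (Hg y Hy)), (proj2 (Hg y' Hy')). lra.
  - assert (H := HV 0 x y y' ltac:(simpl; lra) ltac:(tauto)). unfold VQ in H.
    rewrite (proj2 (Hg y Hy)), (proj2 (Hg y' Hy')) in H. lra.
Qed.

Lemma qc_lip_x x x' y : in01 x -> in01 x' -> in01 y -> x <= x' -> Q x' y - Q x y <= x' - x.
Proof.
  destruct HQ as [_ [Hn HV]]. intros Hx Hx' Hy Hle. unfold in01 in *.
  destruct (Req_dec x x') as [<-|Hne]; [lra|].
  destruct (Req_dec y 1) as [->|Hy1].
  - rewrite (proj1 (Hn x Hx)), (proj1 (Hn x' Hx')). lra.
  - assert (H := HV x x' y 1 ltac:(simpl; lra) ltac:(tauto)). unfold VQ in H.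
    rewrite (proj1 (Hn x Hx)), (proj1 (Hn x' Hx')) in H. lra.
Qed.

Lemma qc_lip_y x y y' : in01 x -> in01 y -> in01 y' -> y <= y' -> Q x y' - Q x y <= y' - y.
Proof.
  destruct HQ as [_ [Hn HV]]. intros Hx Hy Hy' Hle. unfold in01 in *.
  destruct (Req_dec y y') as [<-|Hne]; [lra|].
  destruct (Req_dec x 1) as [->|Hx1].
  - rewrite (proj2 (Hn y Hy)), (proj2 (Hn y' Hy')). lra.
  - assert (H := HV x 1 y y' ltac:(simpl; lra) ltac:(tauto)). unfold VQ in H.
    rewrite (proj2 (Hn y Hy)), (proj2 (Hn y' Hy')) in H. lra.
Qed.
End QuasiCopula.

Lemma stage_fl_in_axes A B n k x : in01 x -> (k <= n)%nat ->
  In (fl k x, 0) (snd (stage A B (S n))) /\ In (0, fl k x) (snd (stage A B (S n))).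
Proof.
  intros Hx Hk. assert (H0 : in01 0) by (unfold in01; lra).
  rewrite <- (fl_zero k). split; apply stage_fl_in; auto.
Qed.

(** * The copula as a limit of the dyadic approximations *)

Section Sufficiency.
Variables A B : R -> R -> R.
Hypothesis HA : is_quasi_copula A.
Hypothesis HB : is_quasi_copula B.
Hypothesis Hab : le01 A B.
Hypothesis HL : forall U : funion, is_funion U -> L_AB A B U >= 0.

Definition approx (n : nat) (x y : R) : R := fst (stage A B (S n)) (fl n x, fl n y).

Let Hadm n : admissible A B (fst (stage A B n)) (snd (stage A B n)) :=
  stage_admissible A B n Hab HL.

(* Refining the grid moves the rounded point up and to the right, where the
   (unchanged) stage function is larger by monotonicity. *)
Lemma approx_mono n x y : in01 x -> in01 y -> approx n x y <= approx (S n) x y.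
Proof.
  intros Hx Hy. unfold approx.
  destruct (stage_keep A B (S n) (S (S n)) (fl n x, fl n y) ltac:(lia)
              (stage_fl_in A B n n n x y Hx Hy ltac:(lia) ltac:(lia))) as [_ <-].
  assert (Hin : forall k1 k2, (k1 <= S n)%nat -> (k2 <= S n)%nat ->
            In (fl k1 x, fl k2 y) (snd (stage A B (S (S n))))) by (intros; apply stage_fl_in; auto).
  destruct (stage_fl_in_axes A B (S n) n x Hx ltac:(lia)) as [Hx0 _].
  destruct (stage_fl_in_axes A B (S n) (S n) x Hx ltac:(lia)) as [Hx1 _].
  destruct (stage_fl_in_axes A B (S n) n y Hy ltac:(lia)) as [_ Hy0].
  destruct (stage_fl_in_axes A B (S n) (S n) y Hy ltac:(lia)) as [_ Hy1].
  apply Rle_trans with (fst (stage A B (S (S n))) (fl (S n) x, fl n y)).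
  - apply (admissible_mono_x A B _ _ (Hadm _)); try apply fl_in01; auto;
      [apply HA | apply HB | apply fl_mono_n |].
    intros p Hp; simpl in Hp; repeat destruct Hp as [<-|Hp]; auto; contradiction.
  - apply (admissible_mono_y A B _ _ (Hadm _)); try apply fl_in01; auto;
      [apply HA | apply HB | apply fl_mono_n |].
    intros p Hp; simpl in Hp; repeat destruct Hp as [<-|Hp]; auto; contradiction.
Qed.

Lemma approx_mono_le N n x y : in01 x -> in01 y -> (N <= n)%nat -> approx N x y <= approx n x y.
Proof.
  intros Hx Hy H. induction H as [|n H IH]; [lra|].
  eapply Rle_trans; [apply IH | apply approx_mono; auto].
Qed.

(* Upper bound: [c <= B] at the rounded point, and [B] is nondecreasing. *)
Lemma approx_le_B n x y : in01 x -> in01 y -> approx n x y <= B x y.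
Proof.
  intros Hx Hy. unfold approx.
  pose proof (admissible_bounds A B _ _ (Hadm (S n)) _
                (stage_fl_in A B n n n x y Hx Hy ltac:(lia) ltac:(lia))) as [_ H]. cbn [fst snd] in H.
  destruct (idx_spec n x Hx) as [_ [Hx1 _]]. destruct (idx_spec n y Hy) as [_ [Hy1 _]].
  eapply Rle_trans; [apply H|].
  eapply Rle_trans; [apply (qc_mono_x B HB _ x); auto; apply fl_in01; auto|].
  apply qc_mono_y; auto. apply fl_in01; auto.
Qed.

(* Lower bound: [A <= c] at the rounded point, and [A] is 1-Lipschitz. *)
Lemma A_le_approx n x y : in01 x -> in01 y -> A x y - 2 * / 2 ^ n <= approx n x y.
Proof.
  intros Hx Hy. unfold approx.
  pose proof (admissible_bounds A B _ _ (Hadm (S n)) _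
                (stage_fl_in A B n n n x y Hx Hy ltac:(lia) ltac:(lia))) as [H _]. cbn [fst snd] in H.
  destruct (idx_spec n x Hx) as [_ [Hx1 Hx2]]. destruct (idx_spec n y Hy) as [_ [Hy1 Hy2]].
  pose proof (qc_lip_x A HA (fl n x) x y (fl_in01 n x Hx) Hx Hy Hx1).
  pose proof (qc_lip_y A HA (fl n x) (fl n y) y (fl_in01 n x Hx) (fl_in01 n y Hy) Hy Hy1).
  lra.
Qed.

(* Rounding preserves the order of the vertices, so a rectangle becomes a
   (possibly degenerate) grid rectangle, whose volume is nonnegative. *)
Lemma approx_rect n s1 s2 t1 t2 : is_rect (s1, s2, t1, t2) ->
  approx n s1 t1 + approx n s2 t2 - approx n s2 t1 - approx n s1 t2 >= 0.
Proof.
  intros Hr. simpl in Hr.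
  assert (Hs1 : in01 s1) by (unfold in01; lra). assert (Hs2 : in01 s2) by (unfold in01; lra).
  assert (Ht1 : in01 t1) by (unfold in01; lra). assert (Ht2 : in01 t2) by (unfold in01; lra).
  unfold approx.
  pose proof (fl_mono n s1 s2 ltac:(lra)). pose proof (fl_mono n t1 t2 ltac:(lra)).
  destruct (Req_dec (fl n s1) (fl n s2)) as [E|E]; [rewrite E; lra|].
  destruct (Req_dec (fl n t1) (fl n t2)) as [E'|E']; [rewrite E'; lra|].
  pose proof (fl_in01 n s1 Hs1). pose proof (fl_in01 n s2 Hs2).
  pose proof (fl_in01 n t1 Ht1). pose proof (fl_in01 n t2 Ht2). unfold in01 in *.
  apply (admissible_rect A B _ _ (Hadm _)); [simpl; lra|].
  intros p Hp; simpl in Hp; repeat destruct Hp as [<-|Hp]; try contradiction;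
    apply stage_fl_in; auto.
Qed.

Definition Csup (x y : R) : R :=
  epsilon (inhabits 0) (fun l => is_lub (fun r => exists n, r = approx n x y) l).

Lemma Csup_lub x y : in01 x -> in01 y -> is_lub (fun r => exists n, r = approx n x y) (Csup x y).
Proof.
  intros Hx Hy. unfold Csup. apply epsilon_spec.
  destruct (completeness (fun r => exists n, r = approx n x y)) as [l Hl].
  - exists (B x y). intros r [n ->]. apply approx_le_B; auto.
  - exists (approx 0 x y), 0%nat. reflexivity.
  - exists l; exact Hl.
Qed.

Lemma Csup_ge x y n : in01 x -> in01 y -> approx n x y <= Csup x y.
Proof. intros Hx Hy. apply (Csup_lub x y Hx Hy). exists n; reflexivity. Qed.

Lemma Csup_approx x y e : in01 x -> in01 y -> 0 < e ->
  exists N, forall n, (N <= n)%nat -> Csup x y - e < approx n x y.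
Proof.
  intros Hx Hy He. destruct (Csup_lub x y Hx Hy) as [_ Hlub].
  destruct (classic (exists N, Csup x y - e < approx N x y)) as [[N HN]|Hno].
  - exists N. intros n Hn. eapply Rlt_le_trans; [apply HN | apply approx_mono_le; auto].
  - exfalso. assert (Csup x y <= Csup x y - e); [|lra].
    apply Hlub. intros r [n ->]. apply Rnot_lt_le. intro H. apply Hno. exists n; auto.
Qed.

Lemma Csup_between : le01 A Csup /\ le01 Csup B.
Proof.
  split; intros x y Hx Hy.
  - apply Rnot_lt_le. intro H. destruct (small_pow2 (A x y - Csup x y) ltac:(lra)) as [n Hn].
    pose proof (A_le_approx n x y Hx Hy). pose proof (Csup_ge x y n Hx Hy). lra.
  - apply (Csup_lub x y Hx Hy). intros r [n ->]. apply approx_le_B; auto.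
Qed.

(* 2-increasingness passes to the limit: approximate the two negative
   vertices within [e] and bound the positive ones by the supremum. *)
Lemma Csup_rect s1 s2 t1 t2 : is_rect (s1, s2, t1, t2) -> VQ Csup s1 s2 t1 t2 >= 0.
Proof.
  intros Hr. assert (Hr' := Hr). simpl in Hr'.
  assert (Hs1 : in01 s1) by (unfold in01; lra). assert (Hs2 : in01 s2) by (unfold in01; lra).
  assert (Ht1 : in01 t1) by (unfold in01; lra). assert (Ht2 : in01 t2) by (unfold in01; lra).
  unfold VQ. apply Rle_ge, Rnot_lt_le. intro Hneg.
  set (e := - (Csup s1 t1 + Csup s2 t2 - Csup s2 t1 - Csup s1 t2) / 4).
  assert (He : 0 < e) by (unfold e; lra).
  destruct (Csup_approx s2 t1 e Hs2 Ht1 He) as [N1 HN1].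
  destruct (Csup_approx s1 t2 e Hs1 Ht2 He) as [N2 HN2].
  set (n := Nat.max N1 N2).
  pose proof (HN1 n ltac:(lia)). pose proof (HN2 n ltac:(lia)).
  pose proof (approx_rect n s1 s2 t1 t2 Hr).
  pose proof (Csup_ge s1 t1 n Hs1 Ht1). pose proof (Csup_ge s2 t2 n Hs2 Ht2).
  unfold e in *. lra.
Qed.

(* A function squeezed between two quasi-copulas inherits their boundary
   values; with [Csup_rect] this makes [Csup] a copula. *)
Lemma Csup_copula : is_copula Csup.
Proof.
  destruct Csup_between as [HAC HCB].
  destruct HA as [HgA [HnA _]]. destruct HB as [HgB [HnB _]].
  assert (H0 : in01 0) by (unfold in01; lra). assert (H1 : in01 1) by (unfold in01; lra).
  split; [|split; [|exact Csup_rect]]; intros x Hx.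
  - pose proof (HAC x 0 Hx H0). pose proof (HCB x 0 Hx H0).
    pose proof (HAC 0 x H0 Hx). pose proof (HCB 0 x H0 Hx).
    destruct (HgA x Hx), (HgB x Hx). split; lra.
  - pose proof (HAC x 1 Hx H1). pose proof (HCB x 1 Hx H1).
    pose proof (HAC 1 x H1 Hx). pose proof (HCB 1 x H1 Hx).
    destruct (HnA x Hx), (HnB x Hx). split; lra.
Qed.
End Sufficiency.

(* The pairing of a copula with the multiplicity of a formal union is the sum
   of the copula volumes of its rectangles, hence nonnegative. *)
Lemma pairing_copula C U sp : is_copula C -> is_funion U -> incl (flat_map corners U) sp ->
  pairing (fun y => C (fst y) (snd y)) sp (mult U) >= 0.
Proof.
  intros [_ [_ HV]]. induction U as [|[[[s1 s2] t1] t2] U IH]; intros HU Hinc.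
  - rewrite (pairing_indep _ sp [] (mult [])); [unfold pairing, sumS; simpl; lra | |].
    + exact (supported_incl _ _ _ Hinc (supported_mult [])).
    + exact (supported_mult []).
  - inversion HU as [|? ? Hr HU']; subst.
    rewrite (pairing_ext _ sp _ (fun y => (mult_rect (s1, s2, t1, t2) y + mult U y)%Z)),
            pairing_add, pairing_rect by (reflexivity || (intros y Hy; apply Hinc; simpl in *; tauto)).
    pose proof (HV s1 s2 t1 t2 Hr). unfold VQ in *. simpl.
    assert (pairing (fun y => C (fst y) (snd y)) sp (mult U) >= 0)
      by (apply IH; auto; intros y Hy; apply Hinc; simpl; tauto).
    lra.
Qed.

Lemma pairing_le_Lw A B (c : pt -> R) sp F : Forall sq sp ->
  (forall y, sq y -> A (fst y) (snd y) <= c y <= B (fst y) (snd y)) ->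
  pairing c sp F <= Lw A B sp F.
Proof.
  intros Hsp Hc. apply sumS_le. intros y Hy. rewrite Forall_forall in Hsp.
  destruct (Hc y (Hsp y Hy)). apply rho_ge; auto.
Qed.

Theorem mainTheorem15 (A B : R -> R -> R) :
  is_quasi_copula A -> is_quasi_copula B -> le01 A B ->
  ((exists C : R -> R -> R, is_copula C /\ le01 A C /\ le01 C B) <->
   (forall U : funion, is_funion U -> L_AB A B U >= 0)).
Proof.
  intros HA HB HAB. split.
  -
    intros [C [HC [HAC HCB]]] U HU. rewrite L_AB_Lw. apply Rle_ge.
    eapply Rle_trans; [apply Rge_le, (pairing_copula C U _ HC HU (incl_refl _))|].
    apply pairing_le_Lw; [apply corners_sq, HU|].
    intros y [Hx Hy]. split; [apply HAC | apply HCB]; auto.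
  -
    intros HL. exists (Csup A B).
    split; [apply Csup_copula | apply Csup_between]; assumption.
Qed.
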